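(* Let $n\ge2$ and let $F:(0,\pi)\to(0,\infty)$ be strictly decreasing. Let $x_1,\dots,x_n$ be distinct points on the unit circle $S^1$, listed in counterclockwise cyclic order, and suppose every particle is in tangential equilibrium under the force law described in the context. Then the arc distance $d(x_i,x_{(i \bmod n)+1})$ between cyclically consecutive particles is the same for all $i=1,\dots,n$.
   Context: For $p,q\in S^1$ let $d(p,q)\in[0,\pi]$ be the geodesic (arc-length) distance. A particle at $q$ exerts on a particle at $p\ne q$ a force tangent to $S^1$ at $p$ of magnitude $F(d(p,q))$, directed away from $q$ along the shorter arc from $q$ to $p$, if $d(p,q)<\pi$; an antipodal particle ($d(p,q)=\pi$) exerts no tangential force. The particle at $x_i$ is in equilibrium if the sum of the (signed, tangential) forces exerted on it by all the other particles $x_j$, $j\ne i$, is zero, i.e. the total force from particles in the open counterclockwise half-circle from $x_i$ equals the total force from particles in the open clockwise half-circle from $x_i$. *)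

From Stdlib Require Import Reals Lra Lia List.
Import ListNotations.
Open Scope R_scope.

(* A point of S^1 is represented by an angle a : R, i.e. the point (cos a, sin a). *)

Definition arcdist (a b : R) : R := acos (cos (b - a)).

(* Signed tangential force (counterclockwise positive) exerted on the particle at
   angle a by the particle at angle b.  The point b lies in the open
   counterclockwise half-circle from a iff sin (b - a) > 0, in the open clockwise
   half-circle iff sin (b - a) < 0; sin (b - a) = 0 means b is antipodal (or equal)
   and then there is no tangential force.  The force has magnitude F (d(a,b)) and
   points away from b along the shorter arc. *)
Definition tforce (F : R -> R) (a b : R) : R :=
  if Rlt_dec 0 (sin (b - a)) then - F (arcdist a b)
  else if Rlt_dec (sin (b - a)) 0 then F (arcdist a b)
  else 0.

Definition sumR (n : nat) (f : nat -> R) : R :=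
  fold_right Rplus 0 (map f (seq 0 n)).

Definition in_equilibrium (F : R -> R) (n : nat) (th : nat -> R) (i : nat) : Prop :=
  sumR n (fun j => if Nat.eq_dec j i then 0 else tforce F (th i) (th j)) = 0.

(* Lift the configuration to a strictly increasing sequence [p] of angles with
   [p (k + n) = p k + 2 PI].  The force felt by a particle from one at angular
   offset [t] counterclockwise is a strictly increasing function of [t] on
   (0, 2 PI).  Pick a largest gap [p (i0 + 1) - p i0].  Seen from particle
   [i0 + 1], every other particle sits at an offset no larger than seen from
   particle [i0], so each force on [i0 + 1] is at most the corresponding force on
   [i0]; both totals vanish, hence all these forces agree and, by strict
   monotonicity, every gap equals the largest one. *)

From Stdlib Require Import Reals Lra Lia List.
Open Scope R_scope.

Lemma fold_right_Rplus_init (l : list R) (a : R) :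
  fold_right Rplus a l = fold_right Rplus 0 l + a.
Proof. induction l as [|x l IH]; simpl; [lra | rewrite IH; lra]. Qed.

Lemma sumR_S (n : nat) (f : nat -> R) : sumR (S n) f = sumR n f + f n.
Proof.
  unfold sumR. rewrite seq_S, map_app, fold_right_app; simpl.
  rewrite fold_right_Rplus_init. lra.
Qed.

Lemma sumR_ext (n : nat) (f g : nat -> R) :
  (forall j, (j < n)%nat -> f j = g j) -> sumR n f = sumR n g.
Proof.
  induction n as [|n IH]; intros Hfg; [reflexivity|].
  rewrite !sumR_S, IH, (Hfg n) by (intros; try apply Hfg; lia). reflexivity.
Qed.

Lemma sumR_S_shift (n : nat) (f : nat -> R) :
  sumR (S n) f = f 0%nat + sumR n (fun j => f (S j)).
Proof.
  induction n as [|n IH]; [unfold sumR; simpl; lra|].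
  rewrite sumR_S, IH, sumR_S. lra.
Qed.

Lemma sumR_le (n : nat) (f g : nat -> R) :
  (forall j, (j < n)%nat -> f j <= g j) -> sumR n f <= sumR n g.
Proof.
  induction n as [|n IH]; intros Hfg; [unfold sumR; simpl; lra|].
  rewrite !sumR_S.
  pose proof (Hfg n ltac:(lia)). pose proof (IH ltac:(intros; apply Hfg; lia)). lra.
Qed.

Lemma sumR_le_eq (n : nat) (f g : nat -> R) :
  (forall j, (j < n)%nat -> f j <= g j) -> sumR n f = sumR n g ->
  forall j, (j < n)%nat -> f j = g j.
Proof.
  induction n as [|n IH]; intros Hfg Hsum j Hj; [lia|].
  rewrite !sumR_S in Hsum.
  pose proof (Hfg n ltac:(lia)).
  pose proof (sumR_le n f g ltac:(intros; apply Hfg; lia)).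
  destruct (Nat.eq_dec j n) as [->|]; [lra|].
  apply IH; [intros; apply Hfg; lia | lra | lia].
Qed.

Lemma sumR_rotate1 (n : nat) (f : nat -> R) : (1 <= n)%nat ->
  sumR n (fun j => f (S j mod n)%nat) = sumR n f.
Proof.
  intros Hn. destruct n as [|m]; [lia|].
  rewrite sumR_S, sumR_S_shift, Nat.Div0.mod_same.
  rewrite (sumR_ext m _ (fun j => f (S j))); [lra|].
  intros j Hj. rewrite Nat.mod_small by lia. reflexivity.
Qed.

Lemma sumR_rotate (n : nat) (f : nat -> R) (i : nat) : (1 <= n)%nat ->
  sumR n (fun k => f ((i + k) mod n)%nat) = sumR n f.
Proof.
  intros Hn. induction i as [|i IH].
  - apply sumR_ext. intros j Hj. rewrite Nat.mod_small by lia. reflexivity.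
  - rewrite <- IH, <- (sumR_rotate1 n (fun k => f ((i + k) mod n)%nat) Hn).
    apply sumR_ext. intros j Hj; cbv beta.
    rewrite Nat.Div0.add_mod_idemp_r. f_equal. f_equal. lia.
Qed.

Lemma exists_argmax_lt (f : nat -> R) (n : nat) : (1 <= n)%nat ->
  exists i0, (i0 < n)%nat /\ forall j, (j < n)%nat -> f j <= f i0.
Proof.
  induction n as [|n IH]; intros Hn; [lia|].
  destruct (Nat.eq_dec n 0) as [->|Hn0].
  { exists 0%nat. split; [lia|]. intros j Hj. replace j with 0%nat by lia. lra. }
  destruct (IH ltac:(lia)) as [i0 [Hi0 Hmax]].
  destruct (Rle_dec (f n) (f i0)) as [Hle|Hgt].
  - exists i0. split; [lia|]. intros j Hj.
    destruct (Nat.eq_dec j n) as [->|]; [lra | apply Hmax; lia].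
  - exists n. split; [lia|]. intros j Hj.
    destruct (Nat.eq_dec j n) as [->|]; [lra|].
    pose proof (Hmax j ltac:(lia)). lra.
Qed.

Lemma increasing_lt (p : nat -> R) : (forall k, p k < p (S k)) ->
  forall a b, (a < b)%nat -> p a < p b.
Proof.
  intros Hstep a b Hab. induction Hab as [|b Hab IH]; [apply Hstep|].
  pose proof (Hstep b). lra.
Qed.

Section EqualGaps.

Variables (n : nat) (p : nat -> R) (g : R -> R).
Hypothesis n_ge1 : (1 <= n)%nat.
Hypothesis p_step : forall k, p k < p (S k).
Hypothesis p_add_n : forall k, p (k + n)%nat = p k + 2 * PI.
Hypothesis g_increasing : forall s t, 0 < s -> s < t -> t < 2 * PI -> g s < g t.
Hypothesis balanced : forall i, sumR n (fun k => g (p (i + k)%nat - p i)) = 0.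

Let gap (k : nat) : R := p (S k) - p k.

Lemma offset_bounds (i k : nat) : (1 <= k < n)%nat ->
  0 < p (i + k)%nat - p i < 2 * PI.
Proof.
  intros Hk.
  pose proof (increasing_lt p p_step i (i + k) ltac:(lia)).
  pose proof (increasing_lt p p_step (i + k) (i + n) ltac:(lia)).
  rewrite p_add_n in *. lra.
Qed.

Lemma gap_add_n (k : nat) : gap (k + n)%nat = gap k.
Proof.
  unfold gap. replace (S (k + n)) with (S k + n)%nat by lia.
  rewrite !p_add_n. ring.
Qed.

Lemma gaps_eq_max_gap (i0 : nat) : (i0 < n)%nat ->
  (forall j, (j < n)%nat -> gap j <= gap i0) ->
  forall k, (k < n)%nat -> gap (i0 + k)%nat = gap i0.
Proof.
  intros Hi0 Hmax.
  assert (Hmax' : forall k, (k < n)%nat -> gap (i0 + k)%nat <= gap i0).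
  { intros k Hk. destruct (Nat.lt_ge_cases (i0 + k) n); [apply Hmax; lia|].
    replace (i0 + k)%nat with ((i0 + k - n) + n)%nat by lia.
    rewrite gap_add_n. apply Hmax. lia. }
  (* The offset seen from [i0 + 1] is the offset seen from [i0] shifted by
     [gap (i0 + k) - gap i0 <= 0]. *)
  assert (Hoffset : forall k, p (S i0 + k)%nat - p (S i0)
      = (p (i0 + k)%nat - p i0) + (gap (i0 + k)%nat - gap i0)).
  { intros k. unfold gap. replace (S i0 + k)%nat with (S (i0 + k)) by lia. ring. }
  assert (Hforce : forall k, (1 <= k < n)%nat -> gap (i0 + k)%nat <> gap i0 ->
      g (p (S i0 + k)%nat - p (S i0)) < g (p (i0 + k)%nat - p i0)).
  { intros k Hk Hne.
    pose proof (offset_bounds (S i0) k Hk). pose proof (offset_bounds i0 k Hk).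
    pose proof (Hmax' k ltac:(lia)).
    rewrite Hoffset in *. apply g_increasing; lra. }
  assert (Hle : forall k, (k < n)%nat ->
      g (p (S i0 + k)%nat - p (S i0)) <= g (p (i0 + k)%nat - p i0)).
  { intros k Hk. destruct (Nat.eq_dec k 0) as [->|Hk0].
    - rewrite !Nat.add_0_r. unfold Rminus. rewrite !Rplus_opp_r. lra.
    - destruct (Req_dec (gap (i0 + k)%nat) (gap i0)) as [He|Hne].
      + rewrite Hoffset, He, Rminus_diag, Rplus_0_r. lra.
      + left. apply Hforce; [lia | exact Hne]. }
  pose proof (sumR_le_eq n _ _ Hle ltac:(rewrite !balanced; reflexivity)) as Heq.
  intros k Hk. destruct (Nat.eq_dec k 0) as [->|Hk0]; [rewrite Nat.add_0_r; reflexivity|].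
  destruct (Req_dec (gap (i0 + k)%nat) (gap i0)) as [He|Hne]; [exact He|].
  pose proof (Heq k Hk). pose proof (Hforce k ltac:(lia) Hne). lra.
Qed.

Lemma gaps_eq (j : nat) : (j < n)%nat -> gap j = gap 0%nat.
Proof.
  destruct (exists_argmax_lt gap n n_ge1) as [i0 [Hi0 Hmax]].
  assert (Hall : forall j, (j < n)%nat -> gap j = gap i0).
  { intros j' Hj'. destruct (Nat.le_gt_cases i0 j').
    - replace j' with (i0 + (j' - i0))%nat by lia. apply gaps_eq_max_gap; auto; lia.
    - rewrite <- gap_add_n. replace (j' + n)%nat with (i0 + (j' + n - i0))%nat by lia.
      apply gaps_eq_max_gap; auto; lia. }
  intros Hj. rewrite (Hall j Hj), (Hall 0%nat) by lia. reflexivity.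
Qed.

End EqualGaps.

Definition force_profile (F : R -> R) (t : R) : R :=
  if Rlt_dec 0 (sin t) then - F (acos (cos t))
  else if Rlt_dec (sin t) 0 then F (acos (cos t)) else 0.

Lemma tforce_profile (F : R -> R) (a b : R) : tforce F a b = force_profile F (b - a).
Proof. reflexivity. Qed.

Lemma force_profile_periodic (F : R -> R) (t : R) (k : nat) :
  force_profile F (t + 2 * INR k * PI) = force_profile F t.
Proof. unfold force_profile. rewrite sin_period, cos_period. reflexivity. Qed.

Lemma force_profile_0 (F : R -> R) : force_profile F 0 = 0.
Proof. unfold force_profile. rewrite sin_0. destruct (Rlt_dec 0 0); [lra | reflexivity]. Qed.

Lemma force_profile_PI (F : R -> R) : force_profile F PI = 0.
Proof. unfold force_profile. rewrite sin_PI. destruct (Rlt_dec 0 0); [lra | reflexivity]. Qed.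

Lemma force_profile_lt_PI (F : R -> R) (t : R) : 0 < t < PI -> force_profile F t = - F t.
Proof.
  intros Ht. unfold force_profile.
  destruct (Rlt_dec 0 (sin t)) as [_|Hs]; [|exfalso; apply Hs, sin_gt_0; lra].
  rewrite acos_cos by lra. reflexivity.
Qed.

Lemma force_profile_gt_PI (F : R -> R) (t : R) :
  PI < t < 2 * PI -> force_profile F t = F (2 * PI - t).
Proof.
  intros Ht. unfold force_profile. pose proof (sin_lt_0 t ltac:(lra) ltac:(lra)).
  destruct (Rlt_dec 0 (sin t)); [lra|]. destruct (Rlt_dec (sin t) 0); [|lra].
  replace (cos t) with (cos (2 * PI - t))
    by (rewrite cos_minus, cos_2PI, sin_2PI; ring).
  rewrite acos_cos by lra. reflexivity.
Qed.

Lemma force_profile_increasing (F : R -> R)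
  (Fpos : forall x, 0 < x < PI -> 0 < F x)
  (Fdec : forall x y, 0 < x < PI -> 0 < y < PI -> x < y -> F y < F x) (s t : R) :
  0 < s -> s < t -> t < 2 * PI -> force_profile F s < force_profile F t.
Proof.
  intros Hs Hst Ht.
  destruct (Rlt_le_dec s PI) as [HsPI|HsPI].
  - rewrite force_profile_lt_PI by lra. pose proof (Fpos s ltac:(lra)).
    destruct (Rlt_le_dec t PI) as [HtPI|HtPI].
    + rewrite force_profile_lt_PI by lra. pose proof (Fdec s t ltac:(lra) ltac:(lra) Hst). lra.
    + destruct (Req_dec t PI) as [->|]; [rewrite force_profile_PI; lra|].
      rewrite force_profile_gt_PI by lra. pose proof (Fpos (2 * PI - t) ltac:(lra)). lra.
  - destruct (Req_dec s PI) as [->|].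
    + rewrite force_profile_PI, force_profile_gt_PI by lra. apply Fpos. lra.
    + rewrite !force_profile_gt_PI by lra. apply Fdec; lra.
Qed.

Lemma arcdist_period (a b : R) (k : nat) : arcdist a (b + 2 * INR k * PI) = arcdist a b.
Proof.
  unfold arcdist. replace (b + 2 * INR k * PI - a) with (b - a + 2 * INR k * PI) by ring.
  rewrite cos_period. reflexivity.
Qed.

Definition lift (n : nat) (th : nat -> R) (k : nat) : R :=
  th (k mod n)%nat + 2 * INR (k / n)%nat * PI.

Section Lift.

Variables (n : nat) (th : nat -> R).
Hypothesis n_ge1 : (1 <= n)%nat.

Lemma lift_small (k : nat) : (k < n)%nat -> lift n th k = th k.
Proof.
  intros Hk. unfold lift. rewrite Nat.mod_small, Nat.div_small by lia. simpl. ring.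
Qed.

Lemma lift_add_mul (k q : nat) :
  lift n th (k + q * n)%nat = lift n th k + 2 * INR q * PI.
Proof.
  unfold lift. rewrite Nat.Div0.mod_add, Nat.div_add, plus_INR by lia. ring.
Qed.

Lemma lift_add_n (k : nat) : lift n th (k + n)%nat = lift n th k + 2 * PI.
Proof. replace (k + n)%nat with (k + 1 * n)%nat by lia. rewrite lift_add_mul. simpl. ring. Qed.

Lemma lift_offset_mod (i k : nat) :
  lift n th (i + k)%nat - lift n th i
  = lift n th (i mod n + k)%nat - lift n th (i mod n).
Proof.
  rewrite (Nat.div_mod_eq i n) at 1 2.
  replace (n * (i / n) + i mod n + k)%nat with (i mod n + k + (i / n) * n)%nat by lia.
  replace (n * (i / n) + i mod n)%nat with (i mod n + (i / n) * n)%nat by lia.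
  rewrite !lift_add_mul. ring.
Qed.

Lemma lift_step
  (Hord : forall i, (S i < n)%nat -> th i < th (S i))
  (Hwrap : th (pred n) < th 0%nat + 2 * PI) (k : nat) :
  lift n th k < lift n th (S k).
Proof.
  rewrite (Nat.div_mod_eq k n).
  replace (n * (k / n) + k mod n)%nat with (k mod n + (k / n) * n)%nat by lia.
  replace (S (k mod n + k / n * n)) with (S (k mod n) + (k / n) * n)%nat by lia.
  rewrite !lift_add_mul. apply Rplus_lt_compat_r.
  assert (Hr : (k mod n < n)%nat) by (apply Nat.mod_upper_bound; lia).
  rewrite lift_small by exact Hr.
  destruct (Nat.lt_ge_cases (S (k mod n)) n).
  - rewrite lift_small by lia. apply Hord. lia.
  - replace (S (k mod n)) with (0 + n)%nat by lia.
    rewrite lift_add_n, lift_small by lia.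
    replace (k mod n) with (pred n) by lia. exact Hwrap.
Qed.

Lemma lift_balanced (F : R -> R)
  (Heq : forall i, (i < n)%nat -> in_equilibrium F n th i) (i : nat) :
  sumR n (fun k => force_profile F (lift n th (i + k)%nat - lift n th i)) = 0.
Proof.
  set (r := (i mod n)%nat).
  assert (Hr : (r < n)%nat) by (apply Nat.mod_upper_bound; lia).
  pose proof (Heq r Hr) as Hsum. unfold in_equilibrium in Hsum.
  rewrite (sumR_ext n _ (fun j => tforce F (th r) (th j))) in Hsum.
  2:{ intros j Hj. destruct (Nat.eq_dec j r) as [->|]; [|reflexivity].
      rewrite tforce_profile, Rminus_diag, force_profile_0. reflexivity. }
  rewrite <- (sumR_rotate n _ r n_ge1) in Hsum.
  rewrite <- Hsum. apply sumR_ext. intros k Hk.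
  rewrite lift_offset_mod. fold r.
  rewrite tforce_profile, (lift_small r Hr). unfold lift.
  replace (th ((r + k) mod n)%nat + 2 * INR ((r + k) / n) * PI - th r)
    with (th ((r + k) mod n)%nat - th r + 2 * INR ((r + k) / n) * PI) by ring.
  apply force_profile_periodic.
Qed.

End Lift.

Theorem mainTheorem3 (n : nat) (F : R -> R) (th : nat -> R)
  (Hn : (2 <= n)%nat)
  (Fpos : forall x, 0 < x < PI -> 0 < F x)
  (Fdec : forall x y, 0 < x < PI -> 0 < y < PI -> x < y -> F y < F x)
  (Hord : forall i, (S i < n)%nat -> th i < th (S i))
  (Hwrap : th (pred n) < th 0%nat + 2 * PI)
  (Heq : forall i, (i < n)%nat -> in_equilibrium F n th i) :
  forall i, (i < n)%nat ->
    arcdist (th i) (th (Nat.modulo (S i) n)) = arcdist (th 0%nat) (th 1%nat).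
Proof.
  intros i Hi.
  assert (Hn1 : (1 <= n)%nat) by lia.
  pose proof (gaps_eq n (lift n th) (force_profile F) Hn1
    (lift_step n th Hn1 Hord Hwrap) (lift_add_n n th Hn1)
    (force_profile_increasing F Fpos Fdec) (lift_balanced n th Hn1 F Heq) i Hi) as Hgap.
  rewrite <- (arcdist_period _ _ (S i / n)), <- (lift_small n th Hn1 i Hi).
  rewrite <- (lift_small n th Hn1 0%nat), <- (lift_small n th Hn1 1%nat) by lia.
  fold (lift n th (S i)).
  unfold arcdist. rewrite Hgap. reflexivity.
Qed.
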